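(* Let $n\ge 6$ and let $G$ be a $4$-Sachs minimal graph in $\mathfrak{G}_{n,2n-4}$. If $\Delta(G)=n-2$, then $G$ is the complete bipartite graph $K_{2,n-2}$.
   Context: $\mathfrak{G}_{n,m}$ is the set of connected simple graphs with $n$ vertices and $m$ edges. $\mathbf{a}_4(G)$ is the coefficient of $\lambda^{n-4}$ in $\det(\lambda\mathbf{I}-\mathbf{A}(G))$ (equivalently, number of 2-matchings minus twice the number of 4-cycles). $G\in\mathfrak{G}_{n,m}$ is $4$-Sachs minimal if $\mathbf{a}_4(G)=\min\{\mathbf{a}_4(H):H\in\mathfrak{G}_{n,m}\}$. $\Delta(G)$ is the maximum degree. *)

From mathcomp Require Import all_boot all_order all_algebra.
Set Implicit Arguments. Unset Strict Implicit. Unset Printing Implicit Defensive.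
Import GRing.Theory Num.Theory.

(* A simple graph on the vertex set 'I_n is given by its edge set:
   a set of 2-element subsets of 'I_n. *)
Definition is_simple (n : nat) (E : {set {set 'I_n}}) : bool :=
  [forall e in E, #|e| == 2].

Definition adj (n : nat) (E : {set {set 'I_n}}) : rel 'I_n :=
  fun x y => (x != y) && ([set x; y] \in E).

Definition deg (n : nat) (E : {set {set 'I_n}}) (v : 'I_n) : nat :=
  #|[set w | adj E v w]|.

Definition max_deg (n : nat) (E : {set {set 'I_n}}) : nat :=
  \max_(v : 'I_n) deg E v.

Definition connected_graph (n : nat) (E : {set {set 'I_n}}) : bool :=
  [forall x, forall y, connect (adj E) x y].

Definition in_Gnm (n m : nat) (E : {set {set 'I_n}}) : bool :=
  [&& is_simple E, connected_graph E & #|E| == m].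

Definition two_matchings (n : nat) (E : {set {set 'I_n}}) : {set {set {set 'I_n}}} :=
  [set M : {set {set 'I_n}} | [&& M \subset E, #|M| == 2 &
     [forall e1 in M, forall e2 in M, (e1 != e2) ==> [disjoint e1 & e2]]]].

Definition vset (n : nat) (C : {set {set 'I_n}}) : {set 'I_n} :=
  \bigcup_(e in C) e.

(* 4-cycles, as subgraphs: sets of 4 edges of E spanning exactly 4 vertices,
   each of which lies in exactly 2 of the edges (a 2-regular graph on 4
   vertices is exactly a 4-cycle). *)
Definition four_cycles (n : nat) (E : {set {set 'I_n}}) : {set {set {set 'I_n}}} :=
  [set C : {set {set 'I_n}} | [&& C \subset E, #|C| == 4, #|vset C| == 4 &
     [forall v in vset C, #|[set e in C | v \in e]| == 2]]].

Definition a4 (n : nat) (E : {set {set 'I_n}}) : int :=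
  (#|two_matchings E|%:Z - 2%:Z * #|four_cycles E|%:Z)%R.

Definition sachs4_minimal (n m : nat) (E : {set {set 'I_n}}) : Prop :=
  in_Gnm m E /\ forall H : {set {set 'I_n}}, in_Gnm m H -> (a4 E <= a4 H)%R.

Definition is_complete_bipartite (n p q : nat) (E : {set {set 'I_n}}) : Prop :=
  exists A B : {set 'I_n},
    [/\ [disjoint A & B], A :|: B = [set: 'I_n], #|A| = p, #|B| = q &
        E = [set [set x; y] | x in A, y in B]].

From mathcomp Require Import all_boot all_order all_algebra.
From mathcomp Require Import zify.
Set Implicit Arguments. Unset Strict Implicit. Unset Printing Implicit Defensive.

(* Let W(G) = tr A(G)^4 count the closed walks of length 4. Such a walk either traverses
   a 4-cycle or backtracks, and counting ordered pairs of disjoint arcs in the same way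
   gives 8 a_4(G) = 4 m^2 - 2 W(G). So a 4-Sachs minimal graph maximises W among
   connected graphs with m = 2n - 4 edges, and comparing with K_{2,n-2} gives
   W(G) >= 8 (n-2)^2.
   Let v have degree s = n - 2, let w be its only non-neighbour, b = deg w > 0, and let
   H = G - v - w; from m = 2s, H has a = s - b edges. Sorting closed walks by their
   visits to v and w gives W(G) = W(H) + 2 s^2 + 6 b^2 + 4 D(H) + 4 P, where D(H) is the
   sum of squared degrees of H and P the sum of squared codegrees of w with the other
   vertices of G - v. Counting walks in H bounds W(H) + 4 D(H) by 6 a^2 + 4 a, and
   P <= min(2ab, ab^2). Against W(G) >= 8 (a + b)^2 this forces a = 0: H has no edge,
   and G = K_{2,n-2}. *)

Lemma card_uniform_fibers (T U : finType) (S : {set T}) (F : {set U}) (f : T -> U) k :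
  {in S, forall p, f p \in F} ->
  {in F, forall u, #|[set p in S | f p == u]| = k} -> #|S| = k * #|F|.
Proof.
move=> fSF fibF; rewrite -sum1_card (partition_big f (mem F)) //=.
by rewrite mulnC -sum_nat_const; apply: eq_bigr => u uF; rewrite sum1dep_card fibF.
Qed.

Lemma card_pairs_sum (T : finType) (P : T -> T -> bool) :
  #|[set p : T * T | P p.1 p.2]| = \sum_x \sum_y (P x y : nat).
Proof.
rewrite -sum1dep_card pair_big /= big_mkcond /=.
by apply: eq_bigr => p _; case: (P _ _).
Qed.

Lemma card_quads_sum (T : finType) (P : T -> T -> T -> T -> bool) :
  #|[set p : T * T * T * T | P p.1.1.1 p.1.1.2 p.1.2 p.2]| =
  \sum_x \sum_y \sum_z \sum_t (P x y z t : nat).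
Proof.
rewrite -sum1dep_card !pair_big /= big_mkcond /=.
by apply: eq_bigr => p _; case: (P _ _ _ _).
Qed.

Lemma card_pair_pairs_sum (T : finType) (P : T -> T -> T -> T -> bool) :
  #|[set p : (T * T) * (T * T) | P p.1.1 p.1.2 p.2.1 p.2.2]| =
  \sum_x \sum_y \sum_z \sum_t (P x y z t : nat).
Proof.
rewrite -sum1dep_card.
under [RHS]eq_bigr do under eq_bigr do rewrite pair_big /=.
rewrite !pair_big /= big_mkcond /=.
by apply: eq_bigr => p _; case: (P _ _ _ _).
Qed.

Lemma sum_indicator (T : finType) (x : T) (F : T -> nat) : \sum_z ((z == x) * F z) = F x.
Proof.
by rewrite (bigD1 x) //= eqxx mul1n big1 ?addn0 // => z /negbTE ->.
Qed.

Lemma sum_indicator_pair (T : finType) (x y : T) : \sum_z \sum_t ((z == x) && (t == y) : nat) = 1.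
Proof.
rewrite -[1](sum_indicator x (fun _ => 1)); apply: eq_bigr => z _.
rewrite muln1 -(sum_indicator y (fun _ => nat_of_bool (z == x))).
by apply: eq_bigr => t _; rewrite mulnb andbC.
Qed.

Lemma sum2D (T : finType) (f g : T -> T -> nat) :
  \sum_z \sum_t (f z t + g z t) = \sum_z \sum_t f z t + \sum_z \sum_t g z t.
Proof. by rewrite -big_split; apply: eq_bigr => z _; rewrite big_split. Qed.

Lemma sum2_mull (T : finType) c (f : T -> T -> nat) :
  \sum_z \sum_t (c * f z t) = c * \sum_z \sum_t f z t.
Proof. by rewrite big_distrr; apply: eq_bigr => z _; rewrite big_distrr. Qed.

Lemma sum4D (T : finType) (f g : T -> T -> T -> T -> nat) :
  \sum_x \sum_y \sum_z \sum_t (f x y z t + g x y z t) =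
  \sum_x \sum_y \sum_z \sum_t f x y z t + \sum_x \sum_y \sum_z \sum_t g x y z t.
Proof.
rewrite -big_split; apply: eq_bigr => x _.
by rewrite -big_split; apply: eq_bigr => y _; rewrite sum2D.
Qed.

Lemma sum4_rot (T : finType) (F : T -> T -> T -> T -> nat) :
  \sum_x \sum_y \sum_z \sum_t F x y z t = \sum_x \sum_y \sum_z \sum_t F y z t x.
Proof.
rewrite [RHS]exchange_big /=; apply: eq_bigr => y _.
rewrite [RHS]exchange_big /=; apply: eq_bigr => z _.
by rewrite [RHS]exchange_big.
Qed.

Lemma eq_set2 (T : finType) (a b x y : T) : x != y ->
  [set a; b] = [set x; y] -> (a = x /\ b = y) \/ (a = y /\ b = x).
Proof.
move=> xy ab_xy.
have ax : a \in [set x; y] by rewrite -ab_xy set21.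
have bx : b \in [set x; y] by rewrite -ab_xy set22.
have xa : x \in [set a; b] by rewrite ab_xy set21.
have ya : y \in [set a; b] by rewrite ab_xy set22.
case/set2P: ax => ea; case/set2P: bx => eb; subst; auto.
- by case/set2P: ya => yx; rewrite yx eqxx in xy.
- by case/set2P: xa => xy'; rewrite xy' eqxx in xy.
Qed.

Lemma cards2_neq (T : finType) (x y : T) : x != y -> #|[set x; y]| = 2.
Proof. by rewrite cards2 => ->. Qed.

Lemma cards2_mem (T : finType) (e : {set T}) x : #|e| = 2 -> x \in e ->
  exists2 y, y != x & e = [set x; y].
Proof.
move/eqP/cards2P => [p [q [pq ->]]] /set2P[]->; first by exists q; rewrite // eq_sym.
by exists p; rewrite // setUC.
Qed.

Lemma set_neq_mem (T : finType) (x : T) (P Q : {set T}) : x \in P -> x \notin Q -> P != Q.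
Proof. by move=> xP; apply: contraNneq => <-. Qed.

Lemma card_set4 (T : finType) (a b c d : T) :
  uniq [:: a; b; c; d] -> #|[set a; b; c; d]| = 4.
Proof.
move=> abcd; rewrite -[4]/(size [:: a; b; c; d]) -(card_uniqP abcd).
by apply: eq_card => x; rewrite !inE -!orbA.
Qed.

Lemma disjoint_set2 (T : finType) (a b c d : T) :
  [disjoint [set a; b] & [set c; d]] = [&& c != a, c != b, d != a & d != b].
Proof.
apply/idP/idP => [dis|/and4P[ca cb da db]].
  have := disjointFl dis (set21 c d); have := disjointFl dis (set22 c d).
  by rewrite !inE => /norP[-> ->] /norP[-> ->].
rewrite disjoints_subset; apply/subsetP => x; rewrite !inE.
by case/orP=> /eqP->; rewrite negb_or; apply/andP; split; rewrite eq_sym.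
Qed.

(** * Closed 4-walks of a symmetric irreflexive relation *)

Section RelationSums.
Variables (T : finType) (A : rel T).

Definition rdeg x := \sum_y (A x y : nat).
Definition vol := \sum_x rdeg x.
Definition sqdeg_sum := \sum_x rdeg x ^ 2.
Definition codeg x z := \sum_y (A x y && A y z : nat).
Definition walk4 x y z t := [&& A x y, A y z, A z t & A t x].
Definition walks4 := \sum_x \sum_y \sum_z \sum_t (walk4 x y z t : nat).
Definition disjoint_arcs x y z t := [&& A x y, A z t, z != x, z != y, t != x & t != y].
Definition arc_pairs := \sum_x \sum_y \sum_z \sum_t (disjoint_arcs x y z t : nat).
Definition cycle4 x y z t := [&& A x y, A y z, A z t, A t x, x != z & y != t].
Definition cycles4 := \sum_x \sum_y \sum_z \sum_t (cycle4 x y z t : nat).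

Lemma rdegE x : rdeg x = #|[set y | A x y]|.
Proof. by rewrite -sum1dep_card big_mkcond. Qed.

Lemma codeg_le x z : codeg x z <= rdeg x.
Proof. by apply: leq_sum => y _; case: (A x y); case: (A y z). Qed.

Lemma sum_arcs_from x : \sum_z \sum_t (A z t && (z == x) : nat) = rdeg x.
Proof.
rewrite -(sum_indicator x rdeg); apply: eq_bigr => z _; rewrite big_distrr /=.
by apply: eq_bigr => t _; rewrite mulnb andbC.
Qed.

Lemma vol_eq0 : vol = 0 -> forall x y, A x y = false.
Proof.
move=> /eqP; rewrite sum_nat_eq0 => /forall_inP vol0 x y; apply/negbTE/negP => axy.
by move: (vol0 x isT); rewrite sum_nat_eq0 => /forall_inP/(_ y isT); rewrite axy.
Qed.

Lemma sum_arc_deg : \sum_x \sum_y ((A x y : nat) * rdeg x) = sqdeg_sum.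
Proof. by apply: eq_bigr => x _; rewrite -big_distrl. Qed.

Hypotheses (symA : symmetric A) (irrA : irreflexive A).

Lemma sum_arcs_to x : \sum_z \sum_t (A z t && (t == x) : nat) = rdeg x.
Proof.
rewrite exchange_big -(sum_indicator x rdeg); apply: eq_bigr => t _.
by rewrite /rdeg big_distrr; apply: eq_bigr => z _ /=; rewrite mulnb andbC symA.
Qed.

Lemma sum_arc_deg_to : \sum_x \sum_y ((A x y : nat) * rdeg y) = sqdeg_sum.
Proof.
rewrite exchange_big; apply: eq_bigr => y _; rewrite -big_distrl /=.
by congr (_ * _); apply: eq_bigr => x _; rewrite symA.
Qed.

Lemma codeg_diag x : codeg x x = rdeg x.
Proof. by apply: eq_bigr => y _; rewrite (symA y x) andbb. Qed.

Lemma double_rdeg_le_vol y : 2 * rdeg y <= vol.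
Proof.
have: \sum_x ((A x y : nat) + (x == y) * rdeg y) <= vol.
  apply: leq_sum => x _; case: (eqVneq x y) => [->|_]; first by rewrite irrA mul1n.
  by rewrite mul0n addn0 /rdeg (bigD1 y) //= leq_addr.
rewrite big_split /= sum_indicator.
have -> : \sum_x (A x y : nat) = rdeg y by apply: eq_bigr => x _; rewrite symA.
lia.
Qed.

(* An arc (z, t) can meet the arc (x, y) at z or at t, in x or in y; only (x, y)
   and (y, x) meet it twice. *)
Lemma disjoint_arcs_point x y z t : A x y ->
  (disjoint_arcs x y z t : nat) + (A z t && (z == x)) + (A z t && (t == x))
   + (A z t && (z == y)) + (A z t && (t == y))
  = A z t + ((z == x) && (t == y)) + ((z == y) && (t == x)).
Proof.
move=> axy; have xy : x != y by apply: contraTneq axy => ->; rewrite irrA.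
have ayx : A y x by rewrite symA.
have loopx : A z t ==> ~~ ((z == x) && (t == x)).
  by apply/implyP=> azt; apply: contraL azt => /andP[/eqP-> /eqP->]; rewrite irrA.
have loopy : A z t ==> ~~ ((z == y) && (t == y)).
  by apply/implyP=> azt; apply: contraL azt => /andP[/eqP-> /eqP->]; rewrite irrA.
have zxy : ~~ ((z == x) && (z == y)) by apply: contraNN xy => /andP[/eqP<- /eqP<-].
have txy : ~~ ((t == x) && (t == y)) by apply: contraNN xy => /andP[/eqP<- /eqP<-].
have xyA : (z == x) && (t == y) ==> A z t by apply/implyP => /andP[/eqP-> /eqP->].
have yxA : (z == y) && (t == x) ==> A z t by apply/implyP => /andP[/eqP-> /eqP->].
move: loopx loopy zxy txy xyA yxA; rewrite /disjoint_arcs axy -!(eq_sym x) -!(eq_sym y).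
by case: (x == z); case: (y == z); case: (x == t); case: (y == t); case: (A z t).
Qed.

Lemma arc_pairsE : arc_pairs + 4 * sqdeg_sum = vol ^ 2 + 2 * vol.
Proof.
have fixed x y : \sum_z \sum_t (disjoint_arcs x y z t : nat)
    + (A x y : nat) * (2 * rdeg x + 2 * rdeg y) = (A x y : nat) * (vol + 2).
  case axy : (A x y); last first.
    by rewrite !mul0n addn0; apply: big1 => z _; apply: big1 => t _; rewrite /disjoint_arcs axy.
  have : \sum_z \sum_t ((disjoint_arcs x y z t : nat) + (A z t && (z == x))
      + (A z t && (t == x)) + (A z t && (z == y)) + (A z t && (t == y)))
    = \sum_z \sum_t ((A z t : nat) + ((z == x) && (t == y)) + ((z == y) && (t == x))).
    by apply: eq_bigr => z _; apply: eq_bigr => t _; apply: disjoint_arcs_point.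
  rewrite !sum2D !sum_arcs_from !sum_arcs_to !sum_indicator_pair /vol /rdeg; lia.
have summed : \sum_x \sum_y (\sum_z \sum_t (disjoint_arcs x y z t : nat)
    + (A x y : nat) * (2 * rdeg x + 2 * rdeg y)) = \sum_x \sum_y ((A x y : nat) * (vol + 2)).
  by apply: eq_bigr => x _; apply: eq_bigr => y _; exact: fixed.
have arcs_deg : \sum_x \sum_y ((A x y : nat) * (2 * rdeg x + 2 * rdeg y))
    = 2 * sqdeg_sum + 2 * sqdeg_sum.
  transitivity (\sum_x \sum_y (2 * ((A x y : nat) * rdeg x))
      + \sum_x \sum_y (2 * ((A x y : nat) * rdeg y))).
    rewrite -sum2D; apply: eq_bigr => x _; apply: eq_bigr => y _.
    by rewrite mulnDr ![_ * (2 * _)]mulnCA.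
  by rewrite !sum2_mull sum_arc_deg sum_arc_deg_to.
have arcs_vol : \sum_x \sum_y ((A x y : nat) * (vol + 2)) = vol * (vol + 2).
  by rewrite big_distrl; apply: eq_bigr => x _; rewrite big_distrl.
rewrite sum2D arcs_deg arcs_vol in summed.
rewrite /arc_pairs; lia.
Qed.

Lemma cycles4_le_arc_pairs : cycles4 <= arc_pairs.
Proof.
apply: leq_sum => x _; apply: leq_sum => y _; apply: leq_sum => z _; apply: leq_sum => t _.
case c4 : (cycle4 x y z t) => //; case/and5P: c4 => axy ayz azt atx /andP[xz yt].
have zy : z != y by apply: contraTneq ayz => ->; rewrite irrA.
have tx : t != x by apply: contraTneq atx => ->; rewrite irrA.
by rewrite /disjoint_arcs axy azt eq_sym xz zy tx eq_sym yt.
Qed.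

Lemma sum_walk4_back x y :
  \sum_z \sum_t (walk4 x y z t && (z == x) : nat) = (A x y : nat) * rdeg x.
Proof.
rewrite -(sum_indicator x (fun _ => (A x y : nat) * rdeg x)).
apply: eq_bigr => z _; case: (eqVneq z x) => [->|zx]; last first.
  by rewrite mul0n; apply: big1 => t _; rewrite andbF.
rewrite mul1n /rdeg big_distrr /=; apply: eq_bigr => t _.
by rewrite /walk4 (symA y x) (symA t x) andbT; case: (A x y); case: (A x t).
Qed.

Lemma sum_walk4_return x y z :
  \sum_t (walk4 x y z t && (t == y) : nat) = (A y x && A y z : nat).
Proof.
rewrite -(sum_indicator y (fun _ => (A y x && A y z : nat))).
apply: eq_bigr => t _; case: (eqVneq t y) => [->|ty]; last by rewrite andbF.
by rewrite mul1n /walk4 andbT (symA x y) (symA z y); case: (A y x); case: (A y z).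
Qed.

Lemma sum_walk4_back_return x y :
  \sum_z \sum_t (walk4 x y z t && (z == x) && (t == y) : nat) = A x y.
Proof.
rewrite -(sum_indicator x (fun _ => (A x y : nat))).
apply: eq_bigr => z _; case: (eqVneq z x) => [->|zx]; last first.
  by rewrite mul0n; apply: big1 => t _; rewrite andbF.
rewrite mul1n -(sum_indicator y (fun _ => (A x y : nat))).
apply: eq_bigr => t _; case: (eqVneq t y) => [->|ty]; last by rewrite andbF.
by rewrite mul1n /walk4 !andbT (symA y x); case: (A x y).
Qed.

(* A closed 4-walk x y z t is a 4-cycle unless it backtracks (z = x or t = y). *)
Lemma cycles4E : cycles4 + 2 * sqdeg_sum = walks4 + vol.
Proof.
have : \sum_x \sum_y \sum_z \sum_t ((cycle4 x y z t : nat)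
      + (walk4 x y z t && (z == x)) + (walk4 x y z t && (t == y)))
    = \sum_x \sum_y \sum_z \sum_t ((walk4 x y z t : nat)
      + (walk4 x y z t && (z == x) && (t == y))).
  apply: eq_bigr => x _; apply: eq_bigr => y _; apply: eq_bigr => z _; apply: eq_bigr => t _.
  rewrite /cycle4 /walk4 (eq_sym x z) (eq_sym y t).
  by case: (A x y); case: (A y z); case: (A z t); case: (A t x); case: (z == x); case: (t == y).
rewrite !sum4D.
have -> : \sum_x \sum_y \sum_z \sum_t (walk4 x y z t && (z == x) : nat) = sqdeg_sum.
  by rewrite -sum_arc_deg; apply: eq_bigr => x _; apply: eq_bigr => y _; rewrite sum_walk4_back.
have -> : \sum_x \sum_y \sum_z \sum_t (walk4 x y z t && (t == y) : nat) = sqdeg_sum.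
  under eq_bigr do under eq_bigr do under eq_bigr do rewrite sum_walk4_return.
  rewrite exchange_big; apply: eq_bigr => y _ /=.
  rewrite -mulnn /rdeg big_distrl; apply: eq_bigr => x _ /=; rewrite big_distrr /=.
  by apply: eq_bigr => z _; rewrite mulnb.
have -> : \sum_x \sum_y \sum_z \sum_t (walk4 x y z t && (z == x) && (t == y) : nat) = vol.
  by apply: eq_bigr => x _; apply: eq_bigr => y _; rewrite sum_walk4_back_return.
rewrite /cycles4 /walks4; lia.
Qed.

Lemma sum_walk4_through x z : \sum_y \sum_t (walk4 x y z t : nat) = codeg x z ^ 2.
Proof.
rewrite -mulnn /codeg big_distrl; apply: eq_bigr => y _ /=; rewrite big_distrr /=.
apply: eq_bigr => t _; rewrite mulnb /walk4 (symA x t) (symA t z).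
by case: (A x y); case: (A y z); case: (A z t); case: (A t x).
Qed.

Lemma sqdeg_sum_le : 4 * sqdeg_sum <= vol ^ 2 + 2 * vol.
Proof. by have := arc_pairsE; lia. Qed.

Lemma walks4_sqdeg_sum_le : walks4 + 2 * sqdeg_sum <= vol ^ 2 + vol.
Proof. by have := arc_pairsE; have := cycles4E; have := cycles4_le_arc_pairs; lia. Qed.

End RelationSums.

Lemma cycle4_rot (T : finType) (A : rel T) x y z t : cycle4 A x y z t = cycle4 A y z t x.
Proof.
rewrite /cycle4 (eq_sym z x).
by case: (A x y); case: (A y z); case: (A z t); case: (A t x); case: (x != z); case: (y != t).
Qed.

Lemma cycle4_rev (T : finType) (A : rel T) x y z t : symmetric A ->
  cycle4 A x y z t = cycle4 A x t z y.
Proof.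
move=> symA; rewrite /cycle4 (symA t z) (symA z y) (symA y x) (symA x t) (eq_sym t y).
by case: (A x y); case: (A y z); case: (A z t); case: (A t x); case: (x != z); case: (y != t).
Qed.

Lemma cycle4_uniq (T : finType) (A : rel T) a b c d : irreflexive A ->
  cycle4 A a b c d -> uniq [:: a; b; c; d].
Proof.
move=> irrA /and5P[ab bc cd da /andP[ac bd]].
have ne x y : A x y -> x != y by move=> axy; apply: contraTneq axy => ->; rewrite irrA.
by rewrite /= !inE !negb_or (ne a b) // ac (ne b c) // bd (ne c d) // eq_sym ne.
Qed.

(** * Vertex deletion and dominating vertices *)

Definition del_vertex (T : finType) (A : rel T) (u : T) : rel T :=
  fun x y => [&& A x y, x != u & y != u].

Section VertexDeletion.
Variables (T : finType) (A : rel T).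
Hypotheses (symA : symmetric A) (irrA : irreflexive A).

Lemma del_vertex_sym u : symmetric (del_vertex A u).
Proof. by move=> x y; rewrite /del_vertex symA; case: (A y x); case: (x != u); case: (y != u). Qed.

Lemma del_vertex_irr u : irreflexive (del_vertex A u).
Proof. by move=> x; rewrite /del_vertex irrA. Qed.

Lemma rdeg_del_vertex u x : x != u -> ~~ A x u -> rdeg (del_vertex A u) x = rdeg A x.
Proof.
move=> xu /negbTE axu; apply: eq_bigr => y _; rewrite /del_vertex xu.
by case: (eqVneq y u) => [->|_]; rewrite ?axu ?andbT ?andbF.
Qed.

Lemma vol_del_vertex u : vol A = vol (del_vertex A u) + 2 * rdeg A u.
Proof.
have : \sum_x \sum_y (A x y : nat) = \sum_x \sum_y ((del_vertex A u x y : nat)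
    + (A x y && (x == u)) + (A x y && (y == u))).
  apply: eq_bigr => x _; apply: eq_bigr => y _; rewrite /del_vertex.
  case: (eqVneq x u) => [->|_]; case: (eqVneq y u) => [->|_]; rewrite ?irrA //=;
  by case: (A _ _).
rewrite !sum2D sum_arcs_from sum_arcs_to //= /vol /rdeg; lia.
Qed.

Lemma sum_walk4_from u :
  \sum_x \sum_y \sum_z \sum_t (walk4 A x y z t && (x == u) : nat) = \sum_z codeg A u z ^ 2.
Proof.
rewrite -(sum_indicator u (fun _ => \sum_z codeg A u z ^ 2)).
apply: eq_bigr => x _; case: (eqVneq x u) => [->|_]; last first.
  by rewrite mul0n; apply: big1 => y _; apply: big1 => z _; apply: big1 => t _; rewrite andbF.
rewrite mul1n exchange_big; apply: eq_bigr => z _ /=.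
rewrite -sum_walk4_through //; apply: eq_bigr => y _; apply: eq_bigr => t _.
by rewrite andbT.
Qed.

Lemma sum_walk4_from_back u :
  \sum_x \sum_y \sum_z \sum_t (walk4 A x y z t && (x == u) && (z == u) : nat) = rdeg A u ^ 2.
Proof.
rewrite -(sum_indicator u (fun _ => rdeg A u ^ 2)).
apply: eq_bigr => x _; case: (eqVneq x u) => [->|_]; last first.
  by rewrite mul0n; apply: big1 => y _; apply: big1 => z _; apply: big1 => t _; rewrite !andbF.
rewrite mul1n -codeg_diag // -sum_walk4_through //; apply: eq_bigr => y _.
rewrite -(sum_indicator u (fun z => \sum_t (walk4 A u y z t : nat))).
apply: eq_bigr => z _; case: (eqVneq z u) => [->|_]; last first.
  by rewrite mul0n; apply: big1 => t _; rewrite andbF.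
by rewrite mul1n; apply: eq_bigr => t _; rewrite !andbT.
Qed.

(* Inclusion-exclusion over the positions of [u] in a closed 4-walk: [u] can
   occupy two opposite positions, but never two consecutive ones. *)
Lemma walks4_del_vertex u :
  walks4 A + 2 * rdeg A u ^ 2 = walks4 (del_vertex A u) + 4 * \sum_z codeg A u z ^ 2.
Proof.
have : \sum_x \sum_y \sum_z \sum_t ((walk4 A x y z t : nat)
     + (walk4 A x y z t && (x == u) && (z == u))
     + (walk4 A y z t x && (y == u) && (t == u)))
  = \sum_x \sum_y \sum_z \sum_t ((walk4 (del_vertex A u) x y z t : nat)
     + (walk4 A x y z t && (x == u)) + (walk4 A y z t x && (y == u))
     + (walk4 A z t x y && (z == u)) + (walk4 A t x y z && (t == u))).
  apply: eq_bigr => x _; apply: eq_bigr => y _; apply: eq_bigr => z _; apply: eq_bigr => t _.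
  rewrite /walk4 /del_vertex.
  case: (eqVneq x u) => [->|_]; case: (eqVneq y u) => [->|_];
  case: (eqVneq z u) => [->|_]; case: (eqVneq t u) => [->|_];
  rewrite ?irrA ?andbF ?andbT //=;
  by case: (A _ _); case: (A _ _); case: (A _ _); case: (A _ _).
rewrite !sum4D.
have -> : \sum_x \sum_y \sum_z \sum_t (walk4 A y z t x && (y == u) && (t == u) : nat)
    = rdeg A u ^ 2 by rewrite -sum_walk4_from_back [RHS]sum4_rot.
have -> : \sum_x \sum_y \sum_z \sum_t (walk4 A y z t x && (y == u) : nat)
    = \sum_z codeg A u z ^ 2 by rewrite -sum_walk4_from [RHS]sum4_rot.
have -> : \sum_x \sum_y \sum_z \sum_t (walk4 A z t x y && (z == u) : nat)
    = \sum_z codeg A u z ^ 2 by rewrite -sum_walk4_from [RHS]sum4_rot [RHS]sum4_rot.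
have -> : \sum_x \sum_y \sum_z \sum_t (walk4 A t x y z && (t == u) : nat)
    = \sum_z codeg A u z ^ 2 by rewrite -sum_walk4_from [RHS]sum4_rot [RHS]sum4_rot [RHS]sum4_rot.
rewrite sum_walk4_from_back sum_walk4_from /walks4; lia.
Qed.

End VertexDeletion.

Section OffDiagonalCodegree.
Variables (T : finType) (A : rel T) (x : T).

Definition offdiag_codeg := \sum_z ((z != x) * codeg A x z).
Definition offdiag_codeg2 := \sum_z ((z != x) * codeg A x z ^ 2).

Lemma offdiag_codeg2_le : offdiag_codeg2 <= rdeg A x * offdiag_codeg.
Proof.
rewrite /offdiag_codeg2 /offdiag_codeg big_distrr /=; apply: leq_sum => z _.
by case: (z != x); rewrite ?mul0n ?muln0 // !mul1n -mulnn leq_mul2r codeg_le orbT.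
Qed.

Hypotheses (symA : symmetric A) (irrA : irreflexive A).

Lemma sum_codeg2_split : \sum_z codeg A x z ^ 2 = rdeg A x ^ 2 + offdiag_codeg2.
Proof.
rewrite -(codeg_diag symA) -(sum_indicator x (fun z => codeg A x z ^ 2)) -big_split /=.
by apply: eq_bigr => z _; case: (eqVneq z x) => [->|_]; rewrite ?mul1n ?mul0n ?addn0.
Qed.

Lemma offdiag_codegE : offdiag_codeg = \sum_y ((A x y : nat) * rdeg (del_vertex A x) y).
Proof.
rewrite /offdiag_codeg; under eq_bigr do rewrite /codeg big_distrr.
rewrite exchange_big /=; apply: eq_bigr => y _; rewrite /rdeg big_distrr /=.
apply: eq_bigr => z _; case axy : (A x y); rewrite ?andbF ?muln0 ?mul0n //=.
have yx : y != x by apply: contraTneq axy => ->; rewrite irrA.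
by rewrite /del_vertex yx mul1n mulnb andbC.
Qed.

Lemma offdiag_codeg_le_vol : offdiag_codeg <= vol (del_vertex A x).
Proof.
by rewrite offdiag_codegE; apply: leq_sum => y _; case: (A x y); rewrite ?mul1n ?mul0n.
Qed.

Lemma double_offdiag_codeg_le : 2 * offdiag_codeg <= rdeg A x * vol (del_vertex A x).
Proof.
rewrite offdiag_codegE big_distrr [rdeg A x]/rdeg big_distrl /=.
apply: leq_sum => y _; rewrite mulnCA; case: (A x y); rewrite ?mul1n ?mul0n //.
exact: double_rdeg_le_vol (del_vertex_sym symA x) (del_vertex_irr irrA x) y.
Qed.

End OffDiagonalCodegree.

Lemma dominating_arith (s b c W D P sg : nat) :
  8 * s ^ 2 <= W + 2 * s ^ 2 + 6 * b ^ 2 + 4 * D + 4 * P -> 2 * s = c + 2 * b ->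
  W + 2 * D <= c ^ 2 + c -> 4 * D <= c ^ 2 + 2 * c ->
  P <= b * sg -> sg <= c -> 2 * sg <= b * c -> 0 < b -> c = 0.
Proof.
move=> hW hs hWD hD hP hsg1 hsg2 b_gt0.
have [a ca] : exists a, c = 2 * a by exists (s - b); lia.
have sab : s = a + b by lia.
subst c s; rewrite sqrnD expnMn in hW hWD hD.
have hP' : 3 * (a * b) <= a + P by nia.
suff : a = 0 by lia.
have [b_le1|b_gt1] := leqP b 1.
  have b1 : b = 1 by lia.
  by subst b; lia.
have : b * sg <= b * (2 * a) by rewrite leq_mul2l hsg1 orbT.
nia.
Qed.

Section DominatingVertex.
Variables (T : finType) (A : rel T) (v w : T).
Hypotheses (symA : symmetric A) (irrA : irreflexive A) (vw : v != w).
Hypothesis adjv : forall y, A v y = (y != v) && (y != w).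

Local Notation A1 := (del_vertex A v).
Local Notation B := (del_vertex (del_vertex A v) w).

Lemma nonadj_dominating : A w v = false.
Proof. by rewrite symA adjv eqxx andbF. Qed.

Lemma rdeg_del_dominating : rdeg A1 w = rdeg A w.
Proof. by rewrite rdeg_del_vertex // 1?eq_sym ?nonadj_dominating. Qed.

Lemma sum_codeg2_dominating :
  \sum_z codeg A v z ^ 2 = rdeg A v ^ 2 + rdeg A w ^ 2 + sqdeg_sum B.
Proof.
have pointwise z : codeg A v z ^ 2
    = (z == v) * rdeg A v ^ 2 + (z == w) * rdeg A w ^ 2 + rdeg B z ^ 2.
  case: (eqVneq z v) => [->|zv].
    rewrite codeg_diag // (negbTE vw) mul1n mul0n addn0.
    suff -> : rdeg B v = 0 by rewrite addn0.
    by apply: big1 => y _; rewrite /del_vertex eqxx /= andbF.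
  case: (eqVneq z w) => [->|zw].
    rewrite mul0n mul1n add0n.
    suff [-> ->] : codeg A v w = rdeg A w /\ rdeg B w = 0 by rewrite addn0.
    split; last by apply: big1 => y _; rewrite /del_vertex eqxx /= !andbF.
    apply: eq_bigr => y _; rewrite adjv (symA y w).
    case: (eqVneq y v) => [->|_]; first by rewrite nonadj_dominating.
    by case: (eqVneq y w) => [->|_]; rewrite ?irrA.
  rewrite !mul0n !add0n; congr (_ ^ 2); apply: eq_bigr => y _.
  by rewrite /del_vertex adjv zv zw (symA y z) /=; case: (A z y); case: (y != v); case: (y != w).
by rewrite (eq_bigr _ (fun z _ => pointwise z)) !big_split /= !sum_indicator.
Qed.

Lemma walks4_dominating :
  walks4 A = walks4 B + 2 * rdeg A v ^ 2 + 6 * rdeg A w ^ 2 + 4 * sqdeg_sum B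
             + 4 * offdiag_codeg2 A1 w.
Proof.
have h1 := walks4_del_vertex symA irrA v.
have h2 := walks4_del_vertex (del_vertex_sym symA v) (del_vertex_irr irrA v) w.
rewrite sum_codeg2_dominating in h1.
rewrite sum_codeg2_split ?rdeg_del_dominating in h2; last exact: del_vertex_sym.
lia.
Qed.

Lemma vol_dominating : vol A = vol B + 2 * rdeg A v + 2 * rdeg A w.
Proof.
have := vol_del_vertex symA irrA v.
have := vol_del_vertex (del_vertex_sym symA v) (del_vertex_irr irrA v) w.
rewrite rdeg_del_dominating; lia.
Qed.

Lemma walks4_dominating_ge : 2 * rdeg A v ^ 2 + 6 * rdeg A w ^ 2 <= walks4 A.
Proof. by rewrite walks4_dominating; lia. Qed.

Lemma dominating_rest_empty : 0 < rdeg A w -> vol A = 4 * rdeg A v ->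
  8 * rdeg A v ^ 2 <= walks4 A -> vol B = 0.
Proof.
move=> w_gt0 volA walksA.
have symA1 := del_vertex_sym symA v; have irrA1 := del_vertex_irr irrA v.
have symB := del_vertex_sym symA1 w; have irrB := del_vertex_irr irrA1 w.
apply: (dominating_arith (s := rdeg A v) (W := walks4 B) (D := sqdeg_sum B)
  (P := offdiag_codeg2 A1 w) (sg := offdiag_codeg A1 w) _ _ _ _ _ _ _ w_gt0).
- by rewrite -walks4_dominating.
- by have := vol_dominating; lia.
- exact: walks4_sqdeg_sum_le.
- exact: sqdeg_sum_le.
- by rewrite -rdeg_del_dominating offdiag_codeg2_le.
- exact: offdiag_codeg_le_vol.
- by rewrite -rdeg_del_dominating double_offdiag_codeg_le.
Qed.

Lemma dominating_bipartite : vol A = 4 * rdeg A v -> vol B = 0 ->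
  forall x y, A x y = ((x \in [set v; w]) != (y \in [set v; w])).
Proof.
move=> volA volB; have B0 := vol_eq0 volB.
have degw : rdeg A w = rdeg A v by have := vol_dominating; lia.
have adjw y : A w y = (y != v) && (y != w).
  have sub : [set y | A w y] \subset [set y | A v y].
    apply/subsetP => u; rewrite !inE adjv => awu; apply/andP; split.
      by apply: contraTneq awu => ->; rewrite nonadj_dominating.
    by apply: contraTneq awu => ->; rewrite irrA.
  have : [set y | A w y] = [set y | A v y].
    by apply/eqP; rewrite eqEcard sub -!rdegE degw leqnn.
  by move/setP/(_ y); rewrite !inE adjv.
move=> x y; rewrite !inE.
case: (eqVneq x v) => [->|xv]; first by rewrite adjv /= negb_or.
case: (eqVneq x w) => [->|xw]; first by rewrite adjw orbT /= negb_or.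
case: (eqVneq y v) => [->|yv]; first by rewrite symA adjv xv xw.
case: (eqVneq y w) => [->|yw]; first by rewrite symA adjw xv xw.
by have := B0 x y; rewrite /del_vertex xv xw yv yw !andbT.
Qed.

End DominatingVertex.

(** * Two-matchings and 4-cycles of a simple graph *)

Section SimpleGraphs.
Variables (n : nat) (E : {set {set 'I_n}}).

Lemma adj_sym : symmetric (adj E).
Proof. by move=> x y; rewrite /adj eq_sym setUC. Qed.

Lemma adj_irr : irreflexive (adj E).
Proof. by move=> x; rewrite /adj eqxx. Qed.

Definition disjoint_edge_pairs := [set q : {set 'I_n} * {set 'I_n} |
  [&& q.1 \in E, q.2 \in E, q.1 != q.2 & [disjoint q.1 & q.2]]].

Lemma card_disjoint_edge_pairs : #|disjoint_edge_pairs| = 2 * #|two_matchings E|.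
Proof.
apply: (card_uniform_fibers (f := fun q : {set 'I_n} * {set 'I_n} => [set q.1; q.2])).
  move=> [e1 e2]; rewrite !inE /= => /and4P[e1E e2E e12 dis].
  rewrite cards2 e12 eqxx /=; apply/andP; split.
    by apply/subsetP => e; rewrite !inE => /orP[]/eqP->.
  apply/forall_inP => f1 /set2P[]-> ; apply/forall_inP => f2 /set2P[]->;
  by rewrite ?eqxx //=; apply/implyP => _; rewrite // disjoint_sym.
move=> M; rewrite inE => /and3P[ME /cards2P[e1 [e2 [e12 Meq]]] /forall_inP dis]; subst M.
have e1M := set21 e1 e2; have e2M := set22 e1 e2.
have d12 : [disjoint e1 & e2] by move/forall_inP: (dis e1 e1M) => /(_ e2 e2M); rewrite e12.
have e1E := subsetP ME e1 e1M; have e2E := subsetP ME e2 e2M.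
rewrite -(@cards2_neq _ (e1, e2) (e2, e1)); last by rewrite xpair_eqE negb_and e12.
apply: eq_card => -[f1 f2]; rewrite !inE /=; apply/idP/idP.
  by case/andP => _ /eqP/(eq_set2 e12)[[-> ->]|[-> ->]]; rewrite eqxx ?orbT.
case/orP => /eqP[-> ->]; rewrite ?e1E ?e2E ?e12 ?d12 ?(disjoint_sym e2) ?d12 ?eqxx //=.
by rewrite eq_sym e12 setUC eqxx.
Qed.

Hypothesis simpleE : is_simple E.

Lemma edgeP e : e \in E -> exists x y, [/\ x != y, e = [set x; y] & adj E x y].
Proof.
move=> eE; have /cards2P[x [y [xy exy]]] := forall_inP simpleE e eE.
by exists x, y; split=> //; rewrite /adj xy -exy.
Qed.

Lemma card_arcs : #|[set p : 'I_n * 'I_n | adj E p.1 p.2]| = 2 * #|E|.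
Proof.
apply: (card_uniform_fibers (f := fun p : 'I_n * 'I_n => [set p.1; p.2])).
  by move=> [a b]; rewrite inE /= => /andP[].
move=> e eE; have [x [y [xy exy axy]]] := edgeP eE.
rewrite -(@cards2_neq _ (x, y) (y, x)); last by rewrite xpair_eqE negb_and xy.
apply: eq_card => -[a b]; rewrite !inE /=; apply/idP/idP.
  by case/andP => /andP[_ _] /eqP; rewrite exy => /(eq_set2 xy)[[-> ->]|[-> ->]];
     rewrite eqxx ?orbT.
by case/orP => /eqP[-> ->]; rewrite -?exy ?axy ?eqxx // adj_sym axy setUC -exy eqxx.
Qed.

Lemma vol_adj : vol (adj E) = 2 * #|E|.
Proof. by rewrite -card_arcs card_pairs_sum. Qed.

Lemma arc_pairs_two_matchings : arc_pairs (adj E) = 8 * #|two_matchings E|.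
Proof.
rewrite /arc_pairs -(card_pair_pairs_sum (disjoint_arcs (adj E))).
rewrite (_ : 8 = 4 * 2) // -mulnA -card_disjoint_edge_pairs.
apply: (card_uniform_fibers (f := fun p : ('I_n * 'I_n) * ('I_n * 'I_n) =>
   ([set p.1.1; p.1.2], [set p.2.1; p.2.2]))).
  move=> [[a b] [c d]]; rewrite !inE /= /disjoint_arcs /adj.
  case/and5P => /andP[ab eab] /andP[cd ecd] ca cb /andP[da db].
  rewrite eab ecd disjoint_set2 ca cb da db /= andbT.
  apply/eqP => eq_ab_cd; have : c \in [set a; b] by rewrite eq_ab_cd set21.
  by rewrite !inE (negbTE ca) (negbTE cb).
move=> [e1 e2]; rewrite inE /= => /and4P[e1E e2E _ dis].
have [a [b [ab e1ab aab]]] := edgeP e1E; have [c [d [cd e2cd acd]]] := edgeP e2E.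
move: dis; rewrite e1ab e2cd disjoint_set2 => /and4P[ca cb da db].
rewrite (_ : 4 = #|[set (a, b); (b, a)]| * #|[set (c, d); (d, c)]|); last first.
  by rewrite !cards2_neq // xpair_eqE negb_and ?ab ?cd.
rewrite -cardsX.
apply: eq_card => -[[x y] [z t]]; rewrite !inE /= xpair_eqE; apply/idP/idP.
  case/andP => _ /andP[/eqP/(eq_set2 ab) h /eqP/(eq_set2 cd) h'].
  by case: h => -[-> ->]; case: h' => -[-> ->]; rewrite !eqxx ?orbT.
have aba : adj E b a by rewrite adj_sym.
have adc : adj E d c by rewrite adj_sym.
case/andP => /orP[]/eqP[-> ->] /orP[]/eqP[-> ->];
  rewrite /disjoint_arcs ?aab ?aba ?acd ?adc ?ca ?cb ?da ?db ?eqxx //=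
    ?(setUC [set b]) ?(setUC [set d]) ?eqxx //.
Qed.

End SimpleGraphs.

Definition cycle_edges (T : finType) (a b c d : T) : {set {set T}} :=
  [set [set a; b]; [set b; c]; [set c; d]; [set d; a]].

Lemma cycle_edges_rot (T : finType) (a b c d : T) : cycle_edges a b c d = cycle_edges b c d a.
Proof. by apply/setP => e; rewrite !inE; case: (e == [set a; b]); rewrite ?orbT ?orbF. Qed.

Lemma cycle_edges_rev (T : finType) (a b c d : T) : cycle_edges a b c d = cycle_edges a d c b.
Proof.
apply/setP => e; rewrite !inE (setUC [set a] [set d]) (setUC [set d] [set c]).
rewrite (setUC [set c] [set b]) (setUC [set b] [set a]).
by case: (e == [set a; b]); case: (e == [set b; c]); case: (e == [set c; d]);
  case: (e == [set d; a]).
Qed.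

Section CycleEdges.
Variables (T : finType) (a b c d : T).
Hypothesis abcd : uniq [:: a; b; c; d].

Lemma card_cycle_edges : #|cycle_edges a b c d| = 4.
Proof.
have := abcd; rewrite /= !inE !negb_or => /and4P[/and3P[ab ac ad] /andP[bc bd] cd _].
rewrite -[4]/(size [:: [set a; b]; [set b; c]; [set c; d]; [set d; a]]) -(card_uniqP _).
  by apply: eq_card => e; rewrite !inE -!orbA.
have nin (x y z : T) : x != y -> x != z -> x \notin [set y; z] by rewrite !inE negb_or => -> ->.
have [ba ca] : b != a /\ c != a by rewrite !(eq_sym _ a).
rewrite /= !inE !negb_or (set_neq_mem (set21 a b) (nin _ _ _ ab ac))
  (set_neq_mem (set21 a b) (nin _ _ _ ac ad)) (set_neq_mem (set22 a b) (nin _ _ _ bd ba))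
  (set_neq_mem (set21 b c) (nin _ _ _ bc bd)) (set_neq_mem (set21 b c) (nin _ _ _ bd ba)).
by rewrite (set_neq_mem (set21 c d) (nin _ _ _ cd ca)).
Qed.

Lemma cycle_edges_deg : #|[set e in cycle_edges a b c d | a \in e]| = 2.
Proof.
have := abcd; rewrite /= !inE !negb_or => /and4P[/and3P[ab ac ad] /andP[bc bd] cd _].
rewrite (_ : [set e in _ | _] = [set [set a; b]; [set d; a]]).
  by rewrite cards2_neq // (set_neq_mem (set22 a b)) // !inE negb_or bd eq_sym ab.
apply/setP => e; rewrite !inE.
case: (eqVneq e [set a; b]) => [->|_]; first by rewrite set21.
case: (eqVneq e [set d; a]) => [->|_]; first by rewrite set22 !orbT.
case: (eqVneq e [set b; c]) => [->|_]; first by rewrite !inE (negbTE ab) (negbTE ac).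
by case: (eqVneq e [set c; d]) => [->|_]; rewrite // !inE (negbTE ac) (negbTE ad).
Qed.

End CycleEdges.

Section FourCycles.
Variables (n : nat) (E : {set {set 'I_n}}).

Lemma mem_vset (C : {set {set 'I_n}}) e u : e \in C -> u \in e -> u \in vset C.
Proof. by move=> eC ue; apply/bigcupP; exists e. Qed.

Lemma vset_cycle_edges (a b c d : 'I_n) : vset (cycle_edges a b c d) = [set a; b; c; d].
Proof.
apply/setP => u; apply/bigcupP/idP => [[e]|].
  by rewrite !inE -!orbA => /or4P[]/eqP-> /set2P[]->; rewrite eqxx ?orbT.
rewrite !inE -!orbA => /or4P[]/eqP->.
- by exists [set a; b]; rewrite !inE ?eqxx.
- by exists [set b; c]; rewrite !inE ?eqxx ?orbT.
- by exists [set c; d]; rewrite !inE ?eqxx ?orbT.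
- by exists [set d; a]; rewrite !inE ?eqxx ?orbT.
Qed.

Lemma cycle_edges_four_cycle a b c d :
  cycle4 (adj E) a b c d -> cycle_edges a b c d \in four_cycles E.
Proof.
move=> abcd; have u0 := cycle4_uniq (@adj_irr n E) abcd.
have u1 : uniq [:: b; c; d; a] by rewrite (rot_uniq 1 [:: a; b; c; d]).
have u2 : uniq [:: c; d; a; b] by rewrite (rot_uniq 2 [:: a; b; c; d]).
have u3 : uniq [:: d; a; b; c] by rewrite (rot_uniq 3 [:: a; b; c; d]).
case/and5P: abcd => /andP[_ ab] /andP[_ bc] /andP[_ cd] /andP[_ da] _.
rewrite inE card_cycle_edges // vset_cycle_edges card_set4 //=.
apply/andP; split; first by apply/subsetP => e; rewrite !inE -!orbA => /or4P[]/eqP->.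
apply/forall_inP => u; rewrite !inE -!orbA => /or4P[]/eqP->; apply/eqP.
- exact: cycle_edges_deg.
- by rewrite cycle_edges_rot cycle_edges_deg.
- by rewrite 2!cycle_edges_rot cycle_edges_deg.
- by rewrite 3!cycle_edges_rot cycle_edges_deg.
Qed.

End FourCycles.

Section FourCycleStructure.
Variables (n : nat) (E C : {set {set 'I_n}}).
Hypotheses (simpleE : is_simple E) (C4 : C \in four_cycles E).

Lemma four_cycle_edge e : e \in C -> #|e| = 2.
Proof.
move: C4; rewrite inE => /and4P[/subsetP CE _ _ _] eC.
exact/eqP/(forall_inP simpleE)/CE.
Qed.

Lemma four_cycle_fourth e1 e2 e3 : exists2 e4, e4 \in C & e4 \notin [:: e1; e2; e3].
Proof.
move: C4; rewrite inE => /and4P[_ /eqP cardC _ _].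
by apply/subsetPn/negP => /subset_leq_card/leq_trans/(_ (card_size _)); rewrite cardC.
Qed.

Lemma four_cycle_at x e1 e2 : e1 \in C -> e2 \in C -> x \in e1 -> x \in e2 -> e1 != e2 ->
  forall e, e \in C -> x \in e -> e = e1 \/ e = e2.
Proof.
move=> e1C e2C xe1 xe2 e12 e eC xe; move: C4; rewrite inE => /and4P[_ _ _ /forall_inP deg].
have at_x : [set f in C | x \in f] = [set e1; e2].
  apply/esym/eqP; rewrite eqEcard cards2 e12 (eqP (deg x (mem_vset e1C xe1))) leqnn andbT.
  by apply/subsetP => f /set2P[]->; rewrite inE ?e1C ?e2C ?xe1 ?xe2.
by apply/set2P; rewrite -at_x inE eC xe.
Qed.

Lemma four_cycle_next x y : [set x; y] \in C -> exists t, [/\ t != x, t != y & [set x; t] \in C].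
Proof.
move=> xyC; move: C4; rewrite inE => /and4P[_ _ _ /forall_inP deg].
have /eqP/cards2_mem := deg x (mem_vset xyC (set21 x y)).
move=> /(_ [set x; y]); rewrite inE xyC set21 => /(_ isT)[e2 e2xy at_x].
have : e2 \in [set e in C | x \in e] by rewrite at_x set22.
rewrite inE => /andP[e2C xe2]; have [t tx e2xt] := cards2_mem (four_cycle_edge e2C) xe2.
by exists t; split; rewrite -?e2xt //; apply: contra_neq e2xy => ty; rewrite e2xt ty.
Qed.

(* The fourth edge would need two further vertices. *)
Lemma four_cycle_triangle_free x y t : x != y -> t != x -> t != y ->
  [set x; y] \in C -> [set x; t] \in C -> [set y; t] \in C -> False.
Proof.
move=> xy tx ty xyC xtC ytC; have [e4 e4C] := four_cycle_fourth [set x; y] [set x; t] [set y; t].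
rewrite !inE !negb_or => /and3P[e4xy e4xt e4yt].
have x_yt : x \notin [set y; t] by rewrite !inE negb_or xy eq_sym tx.
have y_xt : y \notin [set x; t] by rewrite !inE negb_or eq_sym xy eq_sym ty.
have [xy_xt xy_yt] := (set_neq_mem (set22 x y) y_xt, set_neq_mem (set21 x y) x_yt).
have xt_yt := set_neq_mem (set21 x t) x_yt.
have xe4 : x \notin e4.
  by apply/negP => /(four_cycle_at xyC xtC (set21 x y) (set21 x t) xy_xt e4C)[] e;
    rewrite e eqxx in e4xy e4xt.
have ye4 : y \notin e4.
  by apply/negP => /(four_cycle_at xyC ytC (set22 x y) (set21 y t) xy_yt e4C)[] e;
    rewrite e eqxx in e4xy e4yt.
have te4 : t \notin e4.
  by apply/negP => /(four_cycle_at xtC ytC (set22 x t) (set22 y t) xt_yt e4C)[] e;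
    rewrite e eqxx in e4xt e4yt.
move: C4; rewrite inE => /and4P[_ _ /eqP cardV _].
have : #|x |: (y |: (t |: e4))| <= #|vset C|.
  apply/subset_leq_card/subsetP => u; rewrite !inE => /or4P[/eqP->|/eqP->|/eqP->|ue4].
  - exact: mem_vset xyC (set21 x y).
  - exact: mem_vset xyC (set22 x y).
  - exact: mem_vset xtC (set22 x t).
  - exact: mem_vset e4C ue4.
rewrite !cardsU1 (four_cycle_edge e4C) cardV !inE (negbTE te4) (negbTE ye4) (negbTE xe4).
by rewrite (negbTE xy) (eq_sym x t) (negbTE tx) (eq_sym y t) (negbTE ty).
Qed.

Lemma four_cycleP : exists a b c d, cycle4 (adj E) a b c d /\ C = cycle_edges a b c d.
Proof.
have := C4; rewrite inE => /and4P[/subsetP CE /eqP cardC /eqP cardV _].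
have [e1 e1C] : exists e1, e1 \in C by apply/set0Pn; rewrite -card_gt0 cardC.
have /cards2P[x [y [xy e1xy]]] : #|e1| == 2 by rewrite four_cycle_edge.
subst e1; rename e1C into xyC; have yx : y != x by rewrite eq_sym.
have yxC : [set y; x] \in C by rewrite setUC.
have [t [tx ty xtC]] := four_cycle_next xyC; have [z [zy zx yzC]] := four_cycle_next yxC.
have zt : z != t.
  by apply/eqP => ezt; apply: (four_cycle_triangle_free xy tx ty xyC xtC); rewrite -ezt.
have xyzt : uniq [:: x; y; z; t].
  by rewrite /= !inE !negb_or xy !(eq_sym x) zx tx !(eq_sym y) zy ty zt.
have vsetC : vset C = [set x; y; z; t].
  apply/esym/eqP; rewrite eqEcard card_set4 // cardV leqnn andbT.
  apply/subsetP => u; rewrite !inE -!orbA => /or4P[]/eqP->.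
  - exact: mem_vset xyC (set21 x y).
  - exact: mem_vset xyC (set22 x y).
  - exact: mem_vset yzC (set22 y z).
  - exact: mem_vset xtC (set22 x t).
have [e4 e4C] := four_cycle_fourth [set x; y] [set x; t] [set y; z].
rewrite !inE !negb_or => /and3P[e4xy e4xt e4yz].
have xe4 : x \notin e4.
  have xy_xt : [set x; y] != [set x; t].
    by rewrite (set_neq_mem (set22 x y)) // !inE negb_or yx eq_sym ty.
  by apply/negP => /(four_cycle_at xyC xtC (set21 x y) (set21 x t) xy_xt e4C)[] e;
    rewrite e eqxx in e4xy e4xt.
have ye4 : y \notin e4.
  have yx_yz : [set y; x] != [set y; z].
    by rewrite (set_neq_mem (set22 y x)) // !inE negb_or xy eq_sym zx.
  by apply/negP => /(four_cycle_at yxC yzC (set21 y x) (set21 y z) yx_yz e4C)[] e;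
    [rewrite e setUC eqxx in e4xy | rewrite e eqxx in e4yz].
have e4zt : e4 = [set z; t].
  apply/eqP; rewrite eqEcard (four_cycle_edge e4C) cards2 zt andbT.
  apply/subsetP => u ue4; have := mem_vset e4C ue4; rewrite vsetC !inE -!orbA.
  case/or4P => /eqP eu; subst u; rewrite ?eqxx ?orbT //.
  - by rewrite ue4 in xe4.
  - by rewrite ue4 in ye4.
exists x, y, z, t; split.
  rewrite /cycle4 /adj xy eq_sym zy zt tx eq_sym zx eq_sym ty /=.
  by rewrite CE // CE // -e4zt CE // setUC CE.
apply/eqP; rewrite eq_sym eqEcard card_cycle_edges // cardC leqnn andbT.
by apply/subsetP => e; rewrite !inE -!orbA => /or4P[]/eqP->; rewrite -?e4zt // setUC.
Qed.

End FourCycleStructure.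

Lemma cycle_edges_nbr (T : finType) (a b c d u : T) : uniq [:: a; b; c; d] ->
  [set b; u] \in cycle_edges a b c d -> u = a \/ u = c.
Proof.
rewrite /= !inE !negb_or => /and4P[/and3P[ab ac ad] /andP[bc bd] _ _].
rewrite -!orbA => /or4P[]/eqP e.
- by move: (set21 a b); rewrite -e !inE (negbTE ab) => /eqP ->; left.
- by move: (set22 b c); rewrite -e !inE eq_sym (negbTE bc) => /eqP ->; right.
- by move: (set21 b u); rewrite e !inE (negbTE bc) (negbTE bd).
- by move: (set21 b u); rewrite e !inE (negbTE bd) eq_sym (negbTE ab).
Qed.

Lemma cycle_edges_determined (T : finType) (a b c d c' d' : T) :
  uniq [:: a; b; c; d] -> uniq [:: a; b; c'; d'] ->
  cycle_edges a b c d = cycle_edges a b c' d' -> c = c' /\ d = d'.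
Proof.
move=> u u' ec; have := u'; rewrite /= !inE !negb_or => /and4P[/and3P[_ ac' _] /andP[_ bd'] _ _].
have rot3 (x y z t : T) : cycle_edges x y z t = cycle_edges t x y z.
  by rewrite 3!cycle_edges_rot.
have urot (x y z t : T) : uniq [:: x; y; z; t] -> uniq [:: t; x; y; z].
  by move=> uxyzt; rewrite (rot_uniq 3 [:: x; y; z; t]).
split.
  have : [set b; c'] \in cycle_edges a b c d by rewrite ec !inE eqxx orbT.
  by case/(cycle_edges_nbr u) => // c'a; rewrite c'a eqxx in ac'.
have : [set a; d'] \in cycle_edges d a b c.
  by rewrite -rot3 ec rot3 !inE (setUC [set d']) eqxx ?orbT.
by case/(cycle_edges_nbr (urot _ _ _ _ u)) => // d'b; rewrite d'b eqxx in bd'.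
Qed.

Lemma cycle4_through_edge (T : finType) (A : rel T) x y z t a b :
  symmetric A -> irreflexive A -> cycle4 A x y z t -> [set a; b] \in cycle_edges x y z t ->
  exists c d, cycle4 A a b c d /\ cycle_edges a b c d = cycle_edges x y z t.
Proof.
move=> symA irrA.
have first_edge x' y' z' t' : cycle4 A x' y' z' t' -> [set a; b] = [set x'; y'] ->
    exists c d, cycle4 A a b c d /\ cycle_edges a b c d = cycle_edges x' y' z' t'.
  move=> c4; have xy : x' != y'.
    by apply: contraTneq (cycle4_uniq irrA c4) => ->; rewrite /= inE eqxx.
  case/(eq_set2 xy) => -[-> ->]; first by exists z', t'.
  exists t', z'; split; first by rewrite cycle4_rev // -cycle4_rot.
  by rewrite -cycle_edges_rev -cycle_edges_rot.
move=> c4; rewrite !inE -!orbA => /or4P[]/eqP/first_edge.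
- exact.
- by rewrite cycle_edges_rot; apply; rewrite -cycle4_rot.
- by rewrite 2!cycle_edges_rot; apply; rewrite -2!cycle4_rot.
- by rewrite 3!cycle_edges_rot; apply; rewrite -3!cycle4_rot.
Qed.

Section FourCycleCount.
Variables (n : nat) (E : {set {set 'I_n}}).
Hypothesis simpleE : is_simple E.

Definition cycle4_quads :=
  [set p : 'I_n * 'I_n * 'I_n * 'I_n | cycle4 (adj E) p.1.1.1 p.1.1.2 p.1.2 p.2].

Definition quad_cycle_edges (p : 'I_n * 'I_n * 'I_n * 'I_n) :=
  cycle_edges p.1.1.1 p.1.1.2 p.1.2 p.2.

(* A 4-cycle is traversed from each of its 8 arcs, and its first arc determines the
   traversal. *)
Lemma card_cycle4_fiber C : C \in four_cycles E ->
  #|[set p in cycle4_quads | quad_cycle_edges p == C]| = 8.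
Proof.
move=> C4; have [x [y [z [t [c4 eC]]]]] := four_cycleP simpleE C4; subst C.
have := C4; rewrite inE => /and4P[/subsetP CE /eqP cardC _ _].
set F := [set p in _ | _].
pose first_arc (p : 'I_n * 'I_n * 'I_n * 'I_n) := (p.1.1.1, p.1.1.2).
have inj : {in F &, injective first_arc}.
  move=> [[[a b] c] d] [[[a' b'] c'] d']; rewrite !inE /quad_cycle_edges /first_arc /=.
  move=> /andP[c1 /eqP e1] /andP[c2 /eqP e2] [ea eb]; subst a' b'.
  have u1 := cycle4_uniq (@adj_irr n E) c1; have u2 := cycle4_uniq (@adj_irr n E) c2.
  by have [-> ->] := cycle_edges_determined u1 u2 (etrans e1 (esym e2)).
rewrite -(card_in_imset inj).
have simpleC : is_simple (cycle_edges x y z t).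
  by apply/forall_inP => e eC; apply: (forall_inP simpleE); apply: CE.
rewrite (_ : [set first_arc p | p in F] = [set q | adj (cycle_edges x y z t) q.1 q.2]).
  by rewrite card_arcs // cardC.
apply/setP => -[a b]; rewrite inE /=; apply/imsetP/idP.
  move=> [[[[a' b'] c] d]]; rewrite !inE /quad_cycle_edges /first_arc /=.
  move=> /andP[c1 /eqP <-] [-> ->]; have /andP[/norP[ab _] _] := cycle4_uniq (@adj_irr n E) c1.
  by rewrite /adj ab !inE eqxx.
case/andP => _ /(cycle4_through_edge (@adj_sym n E) (@adj_irr n E) c4) [c [d [c1 ec]]].
by exists (a, b, c, d); rewrite // !inE /quad_cycle_edges /= c1 ec eqxx.
Qed.

Lemma cycles4_four_cycles : cycles4 (adj E) = 8 * #|four_cycles E|.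
Proof.
rewrite /cycles4 -(card_quads_sum (cycle4 (adj E))) -/cycle4_quads.
apply: (card_uniform_fibers (f := quad_cycle_edges)) => [p|C]; last exact: card_cycle4_fiber.
by rewrite inE; apply: cycle_edges_four_cycle.
Qed.

End FourCycleCount.

Lemma a4_walks4 n (E : {set {set 'I_n}}) : is_simple E ->
  (8 * a4 E + 2 * (walks4 (adj E))%:Z = (vol (adj E) ^ 2)%:Z)%R.
Proof.
move=> simpleE; have := arc_pairsE (@adj_sym n E) (@adj_irr n E).
have := cycles4E (@adj_sym n E).
rewrite arc_pairs_two_matchings // cycles4_four_cycles // /a4; lia.
Qed.

Lemma walks4_le_of_a4_le n (E F : {set {set 'I_n}}) : is_simple E -> is_simple F ->
  #|E| = #|F| -> (a4 E <= a4 F)%R -> walks4 (adj F) <= walks4 (adj E).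
Proof.
move=> simpleE simpleF EF; have := a4_walks4 simpleE; have := a4_walks4 simpleF.
rewrite !vol_adj // EF => hF hE a4EF.
have : ((walks4 (adj F))%:Z <= (walks4 (adj E))%:Z)%R by lia.
by rewrite lez_nat.
Qed.

Lemma eq_simple_graphs n (E F : {set {set 'I_n}}) : is_simple E -> is_simple F ->
  adj E =2 adj F -> E = F.
Proof.
move=> simpleE simpleF EF; apply/setP => e; apply/idP/idP => eG.
  by have [x [y [_ -> axy]]] := edgeP simpleE eG; move: axy; rewrite EF => /andP[].
by have [x [y [_ -> axy]]] := edgeP simpleF eG; move: axy; rewrite -EF => /andP[].
Qed.

(** * The complete bipartite graph K_{2,n-2} *)

Section CompleteBipartite.
Variables (n : nat) (v w : 'I_n).
Hypothesis vw : v != w.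

Definition bipartite_K2 : {set {set 'I_n}} :=
  [set [set x; y] | x in [set v; w], y in ~: [set v; w]].

Lemma adj_bipartite_K2 x y :
  adj bipartite_K2 x y = ((x \in [set v; w]) != (y \in [set v; w])).
Proof.
rewrite /adj; apply/idP/idP.
  case/andP => xy /imset2P[a b aS]; rewrite inE => bS /esym/(eq_set2 xy)[[<- <-]|[<- <-]];
  by rewrite aS (negbTE bS).
case: (boolP (x \in _)) => xS; case: (boolP (y \in _)) => yS //= _.
  have xy : x != y by apply: contraTneq xS => ->.
  by rewrite xy; apply/imset2P; exists x y; rewrite // in_setC.
have xy : x != y by apply: contraNneq xS => ->.
by rewrite xy; apply/imset2P; exists y x; rewrite // ?in_setC // setUC.
Qed.

Lemma bipartite_K2_simple : is_simple bipartite_K2.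
Proof.
apply/forall_inP => e /imset2P[a b aS]; rewrite inE => bS ->.
by rewrite cards2_neq //; apply: contraTneq aS => ->.
Qed.

Lemma bipartite_K2_dominating u : u \in [set v; w] ->
  forall y, adj bipartite_K2 u y = (y != v) && (y != w).
Proof. by move=> uS y; rewrite adj_bipartite_K2 uS !inE /= negb_or. Qed.

Lemma card_bipartite_K2_side : #|~: [set v; w]| = n - 2.
Proof. by have := cardsC [set v; w]; rewrite card_ord cards2 vw; lia. Qed.

Lemma rdeg_bipartite_K2 u : u \in [set v; w] -> rdeg (adj bipartite_K2) u = n - 2.
Proof.
move=> uS; rewrite rdegE -card_bipartite_K2_side; apply: eq_card => y.
by rewrite !inE bipartite_K2_dominating // negb_or.
Qed.

Lemma vol_bipartite_K2_rest : vol (del_vertex (del_vertex (adj bipartite_K2) v) w) = 0.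
Proof.
apply: big1 => x _; apply: big1 => y _; rewrite /del_vertex adj_bipartite_K2 !inE.
by case: (x == v); case: (x == w); case: (y == v); case: (y == w).
Qed.

Lemma vol_bipartite_K2 : vol (adj bipartite_K2) = 4 * (n - 2).
Proof.
rewrite (vol_dominating (@adj_sym n _) (@adj_irr n _) vw) ?vol_bipartite_K2_rest.
  by rewrite !rdeg_bipartite_K2 ?set21 ?set22 //; lia.
exact/bipartite_K2_dominating/set21.
Qed.

Lemma card_bipartite_K2 : #|bipartite_K2| = 2 * n - 4.
Proof. by have := vol_adj bipartite_K2_simple; rewrite vol_bipartite_K2; lia. Qed.

Lemma walks4_bipartite_K2 : 8 * (n - 2) ^ 2 <= walks4 (adj bipartite_K2).
Proof.
have := walks4_dominating_ge (@adj_sym n _) (@adj_irr n _) vw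
  (bipartite_K2_dominating (set21 v w)).
by rewrite !rdeg_bipartite_K2 ?set21 ?set22 //; lia.
Qed.

Lemma connected_bipartite_K2 : 3 <= n -> connected_graph bipartite_K2.
Proof.
move=> n_ge3; have symK := @adj_sym n bipartite_K2.
have [u] : exists u, u \in ~: [set v; w].
  by apply/set0Pn; rewrite -card_gt0 card_bipartite_K2_side; lia.
rewrite in_setC => uS.
have to_v x : connect (adj bipartite_K2) x v.
  have [xS|xS] := boolP (x \in [set v; w]).
    case/set2P: xS => ->; first exact: connect0.
    have wu : adj bipartite_K2 w u by rewrite adj_bipartite_K2 set22 (negbTE uS).
    have uv : adj bipartite_K2 u v by rewrite adj_bipartite_K2 set21 (negbTE uS).
    exact: connect_trans (connect1 wu) (connect1 uv).
  by apply: connect1; rewrite adj_bipartite_K2 set21 (negbTE xS).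
apply/forallP => x; apply/forallP => y.
by apply: connect_trans (to_v x) _; rewrite (sym_connect_sym symK) to_v.
Qed.

Lemma bipartite_K2_in_Gnm : 3 <= n -> in_Gnm (2 * n - 4) bipartite_K2.
Proof.
move=> n_ge3; rewrite /in_Gnm bipartite_K2_simple connected_bipartite_K2 //.
by rewrite card_bipartite_K2 eqxx.
Qed.

Lemma bipartite_K2_complete : is_complete_bipartite 2 (n - 2) bipartite_K2.
Proof.
exists [set v; w], (~: [set v; w]); split => //.
- by rewrite disjoints_subset setCK.
- exact: setUCr.
- by rewrite cards2 vw.
- exact: card_bipartite_K2_side.
Qed.

End CompleteBipartite.

(** * Vertices of degree n - 2 *)

Lemma rdeg_gt0_connected n (E : {set {set 'I_n}}) u u' :
  connected_graph E -> u != u' -> 0 < rdeg (adj E) u.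
Proof.
move=> /forallP/(_ u)/forallP/(_ u')/connectP[[|y p] /= walk_u last_u uu'].
  by rewrite last_u eqxx in uu'.
by case/andP: walk_u => auy _; rewrite /rdeg (bigD1 y) //= auy.
Qed.

Lemma deg_subn2_nonadj n (E : {set {set 'I_n}}) v : 2 <= n -> deg E v = n - 2 ->
  exists2 w, v != w & forall y, adj E v y = (y != v) && (y != w).
Proof.
move=> n_ge2 degv.
have nonnbrs : #|~: [set y | adj E v y]| = 2.
  by have := cardsC [set y | adj E v y]; rewrite card_ord -/(deg E v) degv; lia.
have vN : v \in ~: [set y | adj E v y] by rewrite !inE adj_irr.
have [w wv Nw] := cards2_mem nonnbrs vN; exists w; first by rewrite eq_sym.
by move=> y; move/setP/(_ y): Nw; rewrite !inE -negb_or => <-; rewrite negbK.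
Qed.

Theorem lemma4p6 (n : nat) (E : {set {set 'I_n}}) :
  6 <= n ->
  sachs4_minimal (2 * n - 4) E ->
  max_deg E = n - 2 ->
  is_complete_bipartite 2 (n - 2) E.
Proof.
move=> n_ge6 [GE minE] maxdeg; case/and3P: (GE) => simpleE connE /eqP cardE.
have [v degv] : exists v, deg E v = n - 2.
  have : 0 < #|'I_n| by rewrite card_ord; lia.
  by case/(eq_bigmax (deg E)) => v vmax; exists v; rewrite -maxdeg /max_deg vmax.
have [|w vw adjv] := deg_subn2_nonadj _ degv; first by lia.
have walksK : walks4 (adj (bipartite_K2 v w)) <= walks4 (adj E).
  apply: walks4_le_of_a4_le simpleE (bipartite_K2_simple v w) _ (minE _ _).
    by rewrite cardE card_bipartite_K2.
  by apply: bipartite_K2_in_Gnm; lia.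
have rdegv : rdeg (adj E) v = n - 2 by rewrite rdegE.
have volE : vol (adj E) = 4 * rdeg (adj E) v by rewrite vol_adj // cardE rdegv; lia.
have wv : w != v by rewrite eq_sym.
have walksE : 8 * rdeg (adj E) v ^ 2 <= walks4 (adj E).
  by rewrite rdegv; apply: leq_trans (walks4_bipartite_K2 vw) walksK.
have rest0 := dominating_rest_empty (@adj_sym n E) (@adj_irr n E) vw adjv
  (rdeg_gt0_connected connE wv) volE walksE.
suff -> : E = bipartite_K2 v w by exact: bipartite_K2_complete.
apply: eq_simple_graphs simpleE (bipartite_K2_simple v w) _ => x y.
by rewrite (dominating_bipartite (@adj_sym n E) (@adj_irr n E) vw adjv volE rest0)
  adj_bipartite_K2.
Qed.
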